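(* Let $|\Psi\rangle\in\mathcal{B}^n$ be an $M$-party stabilizer state with stabilizer group $S$, and suppose $S=S_{loc}:=\sum_{\alpha\in M}S_{\hat\alpha}$. Then $\Gamma(\Psi)=\{|\Psi\rangle\langle\Psi|\}$, where $\Gamma(\Psi)$ is the set of density operators $\rho$ on $\mathcal{B}^n$ with $\mathrm{Tr}_\alpha\rho=\mathrm{Tr}_\alpha|\Psi\rangle\langle\Psi|$ for all $\alpha\in M$.
   Context: Let $G^n\cong\mathbb{F}_2^{2n}$, with elements $f=(a_1,b_1,\dots,a_n,b_n)$; $\sigma_{00}=I,\sigma_{10}=\sigma^x,\sigma_{01}=\sigma^z,\sigma_{11}=\sigma^y$, $\sigma(f)=\sigma_{a_1b_1}\otimes\cdots\otimes\sigma_{a_nb_n}$ on $\mathcal{B}^n=(\mathbb{C}^2)^{\otimes n}$; symplectic form $\omega(f,f')=\sum_j(a_jb_j'+b_ja_j')\bmod 2$. A subspace $S$ is self-dual if $S=\{f:\omega(f,g)=0\ \forall g\in S\}$; a stabilizer state with stabilizer group $S$ (self-dual) is the unique up-to-phase unit vector with $\sigma(f)|\Psi\rangle=\epsilon(f)|\Psi\rangle$ for all $f\in S$ for fixed consistent signs $\epsilon(f)\in\{\pm1\}$. Party $\alpha\in M$ (a finite set) holds $n_\alpha$ qubits, $n=\sum_\alpha n_\alpha$; $f_\alpha$ is the restriction of $f$ to party $\alpha$'s qubits; co-local subgroup $S_{\hat\alpha}=\{g\in S:g_\alpha=0\}$. $\mathrm{Tr}_\alpha$ is the partial trace over party $\alpha$'s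 qubits. *)

From mathcomp Require Import all_boot all_order all_algebra.
Set Implicit Arguments. Unset Strict Implicit. Unset Printing Implicit Defensive.
Import Order.TTheory GRing.Theory Num.Theory.
Local Open Scope ring_scope.

(* Computational basis labels of B^n = (C^2)^{(x)n}: bit strings. *)
Definition bits (n : nat) := {ffun 'I_n -> bool}.

(* Elements f = (a_1,b_1,...,a_n,b_n) of G^n = F_2^{2n}; f j = (a_j, b_j). *)
Definition pauliG (n : nat) := {ffun 'I_n -> bool * bool}.

Definition gzero (n : nat) : pauliG n := [ffun _ => (false, false)].
Definition gadd (n : nat) (f g : pauliG n) : pauliG n :=
  [ffun j => ((f j).1 (+) (g j).1, (f j).2 (+) (g j).2)].

Definition omega (n : nat) (f g : pauliG n) : bool :=
  \big[addb/false]_(j < n) (((f j).1 && (g j).2) (+) ((f j).2 && (g j).1)).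

Definition self_dual (n : nat) (S : {set pauliG n}) : Prop :=
  S = [set f : pauliG n | [forall g in S, ~~ omega f g]].

(* single-qubit Pauli sigma_{ab} entries <x| sigma_{ab} |y>:
   sigma_00 = I, sigma_10 = X, sigma_01 = Z, sigma_11 = Y = [[0,-i],[i,0]] *)
Definition pauli1 (C : numClosedFieldType) (ab : bool * bool) (x y : bool) : C :=
  if x == (y (+) ab.1) then
    (if ab.1 && ab.2 then 'i else 1) * (if ab.2 && y then -1 else 1)
  else 0.

Definition sigma (C : numClosedFieldType) (n : nat) (f : pauliG n) (x y : bits n) : C :=
  \prod_(j < n) pauli1 C (f j) (x j) (y j).

Definition apply_op (C : numClosedFieldType) (n : nat)
  (A : bits n -> bits n -> C) (v : bits n -> C) (x : bits n) : C :=
  \sum_(y : bits n) A x y * v y.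

(* Parties: qubit j belongs to party (party j); party alpha holds
   n_alpha = #{j | party j = alpha} qubits. *)

Definition coloc (n : nat) (M : finType) (party : 'I_n -> M)
  (S : {set pauliG n}) (alpha : M) : {set pauliG n} :=
  [set g in S | [forall j : 'I_n, (party j == alpha) ==> (g j == (false, false))]].

Definition Sloc (n : nat) (M : finType) (party : 'I_n -> M)
  (S : {set pauliG n}) : {set pauliG n} :=
  [set f : pauliG n | [exists g : {ffun M -> pauliG n},
     [forall alpha, g alpha \in coloc party S alpha] &&
     (f == \big[@gadd n/gzero n]_(alpha : M) g alpha)]].

Definition is_density (C : numClosedFieldType) (n : nat) (rho : bits n -> bits n -> C) : Prop :=
  (forall v : bits n -> C,
     0 <= \sum_(x : bits n) \sum_(y : bits n) (v x)^* * rho x y * v y)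
  /\ \sum_(x : bits n) rho x x = 1.

Definition proj (C : numClosedFieldType) (n : nat) (psi : bits n -> C) (x y : bits n) : C :=
  psi x * (psi y)^*.

(* The result is represented as
   a function on full bit strings that only depends on the coordinates of
   the qubits NOT held by alpha (those of alpha are overwritten by the
   summation variable z), so equality of these functions is exactly
   equality of the reduced operators. *)
Definition glue (n : nat) (M : finType) (party : 'I_n -> M) (alpha : M)
  (x z : bits n) : bits n :=
  [ffun j => if party j == alpha then z j else x j].

Definition ptrace (C : numClosedFieldType) (n : nat) (M : finType) (party : 'I_n -> M)
  (alpha : M) (rho : bits n -> bits n -> C) (x y : bits n) : C :=
  \sum_(z : bits n | [forall j, (party j != alpha) ==> ~~ z j])
     rho (glue party alpha x z) (glue party alpha y z).

Definition Gamma (C : numClosedFieldType) (n : nat) (M : finType) (party : 'I_n -> M)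
  (psi : bits n -> C) (rho : bits n -> bits n -> C) : Prop :=
  is_density rho /\
  forall alpha x y, ptrace party alpha rho x y = ptrace party alpha (proj psi) x y.

From mathcomp Require Import all_boot all_order all_algebra ring.
From Stdlib Require Import FunctionalExtensionality.
Import Order.TTheory GRing.Theory Num.Theory.
Local Open Scope ring_scope.
Set Implicit Arguments. Unset Strict Implicit.

(* The Pauli operators sigma(f) form an orthogonal basis of the operators on B^n, so an
   operator is determined by its coefficients tr(sigma(f) rho).  For a co-local
   g in S_{hat alpha}, tr(rho sigma(g)) only depends on Tr_alpha rho, hence equals the
   eigenvalue +-1 of |Psi>; for a density operator rho this forces sigma(g) rho = +-rho.
   Stabilization is preserved by products, so every f in S_loc = S stabilizes rho with
   the same eigenvalue as |Psi><Psi|, and the coefficients at f in S agree.  For f not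
   in S, self-duality provides g in S anticommuting with sigma(f), which makes both
   coefficients vanish. *)

Section Conjugation.
Variable C : numClosedFieldType.
Implicit Types x y : C.

Lemma conjCD x y : (x + y)^* = x^* + y^*. Proof. exact: rmorphD. Qed.
Lemma conjCN x : (- x)^* = - x^*. Proof. exact: rmorphN. Qed.
Lemma conjCM x y : (x * y)^* = x^* * y^*. Proof. exact: rmorphM. Qed.

Lemma conjC_sum (I : Type) (r : seq I) (P : pred I) (F : I -> C) :
  (\sum_(i <- r | P i) F i)^* = \sum_(i <- r | P i) (F i)^*.
Proof. exact: rmorph_sum. Qed.

End Conjugation.

Section SingleQubit.
Variable C : numClosedFieldType.

Definition pauli1_phase (a b : bool * bool) : C :=
  match a, b with
  | (true, false), (false, true) => - 'i
  | (false, true), (true, false) => 'i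
  | (true, false), (true, true) => 'i
  | (true, true), (true, false) => - 'i
  | (false, true), (true, true) => - 'i
  | (true, true), (false, true) => 'i
  | _, _ => 1
  end.

Lemma mulCii : 'i * 'i = -1 :> C.
Proof. by rewrite -expr2 sqrCi. Qed.

Lemma pauli1_adj ab x y : pauli1 C ab x y = (pauli1 C ab y x)^*.
Proof.
by case: ab => [[] []]; case: x; case: y;
  rewrite /pauli1 /= ?mulr1 ?mul1r ?mulrN1 ?rmorph1 ?rmorphN1 ?rmorph0 ?conjCN ?conjCi ?opprK.
Qed.

Lemma pauli1_mul a b x z :
  \sum_(y : bool) pauli1 C a x y * pauli1 C b y z =
  pauli1_phase a b * pauli1 C (a.1 (+) b.1, a.2 (+) b.2) x z.
Proof.
rewrite big_bool.
by case: a => [[] []]; case: b => [[] []]; case: x; case: z;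
  rewrite /pauli1 /pauli1_phase /=
    ?(mulr1, mul1r, mulrN, mulNr, opprK, mulr0, mul0r, addr0, add0r, oppr0, mulCii).
Qed.

Lemma pauli1_phaseC a b :
  pauli1_phase a b = (-1) ^+ ((a.1 && b.2) (+) (a.2 && b.1)) * pauli1_phase b a.
Proof.
by case: a => [[] []]; case: b => [[] []]; rewrite /pauli1_phase /= ?mul1r ?mulN1r ?opprK.
Qed.

Lemma pauli1_phase_id a : pauli1_phase a a = 1.
Proof. by case: a => [[] []]. Qed.

Lemma pauli1_phase_neq0 a b : pauli1_phase a b != 0.
Proof.
by case: a => [[] []]; case: b => [[] []]; rewrite /pauli1_phase ?oppr_eq0 ?oner_neq0 ?neq0Ci.
Qed.

Lemma pauli1_id x y : pauli1 C (false, false) x y = (x == y)%:R.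
Proof. by rewrite /pauli1 /= addbF mulr1; case: (x == y). Qed.

Lemma pauli1_complete a b c d :
  \sum_(p : bool * bool) pauli1 C p a b * pauli1 C p c d = 2 * ((a == d) && (b == c))%:R.
Proof.
rewrite -(pair_bigA _ (fun u v => pauli1 C (u, v) a b * pauli1 C (u, v) c d)) /= !big_bool /=.
by case: a; case: b; case: c; case: d; rewrite /pauli1 /=;
  rewrite ?(mulr1, mul1r, mulrN, mulNr, opprK, mulr0, mul0r, addr0, add0r, mulCii, addNr).
Qed.

End SingleQubit.

Section PauliOperators.
Variables (C : numClosedFieldType) (n : nat).
Local Notation op := (bits n -> bits n -> C).
Implicit Types (f g : pauliG n) (A B : op).

Definition opmul (A B : op) : op := fun x z => \sum_(y : bits n) A x y * B y z.
Definition optrace (A : op) : C := \sum_(x : bits n) A x x.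
Definition opscale (c : C) (A : op) : op := fun x z => c * A x z.
Definition opadj (A : op) : op := fun x y => (A y x)^*.
Definition opid : op := fun x y => (x == y)%:R.

Lemma op_ext (A B : op) : (forall x y, A x y = B x y) -> A = B.
Proof. by move=> eqAB; do 2![apply: functional_extensionality => ?]. Qed.

Lemma opmulA (A B D : op) : opmul (opmul A B) D = opmul A (opmul B D).
Proof.
apply: op_ext => x z; rewrite /opmul.
under eq_bigr do rewrite mulr_suml.
under [RHS]eq_bigr do rewrite mulr_sumr.
by rewrite exchange_big; apply: eq_bigr => y _; apply: eq_bigr => w _; rewrite mulrA.
Qed.

Lemma sum_delta_l (F : bits n -> C) x : \sum_(y : bits n) (x == y)%:R * F y = F x.
Proof.
rewrite (bigD1 x) //= eqxx mul1r big1 ?addr0 // => y.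
by rewrite eq_sym => /negbTE ->; rewrite mul0r.
Qed.

Lemma sum_delta_r (F : bits n -> C) x : \sum_(y : bits n) F y * (y == x)%:R = F x.
Proof. by rewrite -(sum_delta_l F x); apply: eq_bigr => y _; rewrite mulrC eq_sym. Qed.

Lemma opmul1l (A : op) : opmul opid A = A.
Proof. by apply: op_ext => x z; rewrite /opmul /opid sum_delta_l. Qed.

Lemma opmulZl c (A B : op) : opmul (opscale c A) B = opscale c (opmul A B).
Proof.
by apply: op_ext => x z; rewrite /opmul /opscale mulr_sumr; under [RHS]eq_bigr do rewrite mulrA.
Qed.

Lemma opmulZr c (A B : op) : opmul A (opscale c B) = opscale c (opmul A B).
Proof.
by apply: op_ext => x z; rewrite /opmul /opscale mulr_sumr; under eq_bigr do rewrite mulrCA.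
Qed.

Lemma opscaleA c d (A : op) : opscale c (opscale d A) = opscale (c * d) A.
Proof. by apply: op_ext => x z; rewrite /opscale mulrA. Qed.

Lemma opscale1 (A : op) : opscale 1 A = A.
Proof. by apply: op_ext => x z; rewrite /opscale mul1r. Qed.

Lemma optraceZ c (A : op) : optrace (opscale c A) = c * optrace A.
Proof. by rewrite /optrace mulr_sumr. Qed.

Lemma optrace_mulC (A B : op) : optrace (opmul A B) = optrace (opmul B A).
Proof.
rewrite /optrace /opmul exchange_big.
by apply: eq_bigr => y _; apply: eq_bigr => w _; rewrite mulrC.
Qed.

Lemma opadj_mul (A B : op) : opadj (opmul A B) = opmul (opadj B) (opadj A).
Proof.
apply: op_ext => x z; rewrite /opadj /opmul rmorph_sum.
by apply: eq_bigr => y _; rewrite rmorphM mulrC.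
Qed.

Lemma opadjZ c (A : op) : opadj (opscale c A) = opscale c^* (opadj A).
Proof. by apply: op_ext => x y; rewrite /opadj /opscale rmorphM. Qed.

Definition pauli_phase (f g : pauliG n) : C := \prod_(j < n) pauli1_phase C (f j) (g j).

Lemma pauli_phaseC f g : pauli_phase f g = (-1) ^+ omega f g * pauli_phase g f.
Proof.
rewrite /pauli_phase /omega (big_morph (fun b : bool => (-1) ^+ b : C) (id1 := 1) (op1 := *%R)).
- by rewrite -big_split; apply: eq_bigr => j _; rewrite pauli1_phaseC.
- by move=> a b; rewrite signr_addb.
- by [].
Qed.

Lemma pauli_phase_id f : pauli_phase f f = 1.
Proof. by rewrite /pauli_phase big1 // => j _; rewrite pauli1_phase_id. Qed.

Lemma pauli_phase_neq0 f g : pauli_phase f g != 0.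
Proof.
by rewrite /pauli_phase prodf_seq_neq0; apply/allP => j _; rewrite pauli1_phase_neq0.
Qed.

Lemma gaddC (f g : pauliG n) : gadd f g = gadd g f.
Proof. by apply/ffunP => j; rewrite !ffunE addbC [(g j).2 (+) _]addbC. Qed.

Lemma gaddss (f : pauliG n) : gadd f f = gzero n.
Proof. by apply/ffunP => j; rewrite !ffunE !addbb. Qed.

Lemma sigma_mul f g :
  opmul (sigma C f) (sigma C g) = opscale (pauli_phase f g) (sigma C (gadd f g)).
Proof.
apply: op_ext => x z; rewrite /opmul /sigma /pauli_phase /opscale.
under eq_bigr do rewrite -big_split /=.
rewrite -(bigA_distr_bigA (fun j b => pauli1 C (f j) (x j) b * pauli1 C (g j) b (z j))).
by rewrite -big_split; apply: eq_bigr => j _; rewrite pauli1_mul ffunE.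
Qed.

Lemma sigma0 : sigma C (gzero n) = opid.
Proof.
apply: op_ext => x y; rewrite /sigma /opid.
under eq_bigr do rewrite ffunE pauli1_id.
have [->|/eqP neq_xy] := eqVneq x y; first by rewrite big1 // => j _; rewrite eqxx.
have [j neq_j] : exists j, x j != y j.
  apply/existsP; rewrite -negb_forall; apply/negP => /forallP eq_xy.
  by apply: neq_xy; apply/ffunP => j; apply/eqP.
by rewrite (bigD1 j) //= (negbTE neq_j) mul0r.
Qed.

Lemma sigma_sqr f : opmul (sigma C f) (sigma C f) = opid.
Proof. by rewrite sigma_mul pauli_phase_id opscale1 gaddss sigma0. Qed.

Lemma sigma_anticomm f g : omega f g ->
  opmul (sigma C f) (sigma C g) = opscale (-1) (opmul (sigma C g) (sigma C f)).
Proof. by move=> omega_fg; rewrite !sigma_mul pauli_phaseC omega_fg opscaleA gaddC. Qed.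

Lemma sigma_adj f (x y : bits n) : (sigma C f y x)^* = sigma C f x y.
Proof. by rewrite /sigma rmorph_prod; apply: eq_bigr => j _; rewrite [RHS]pauli1_adj. Qed.

Lemma opadj_sigma f : opadj (sigma C f) = sigma C f.
Proof. by apply: op_ext => x y; rewrite /opadj sigma_adj. Qed.

Lemma sigma_complete (a b c d : bits n) :
  \sum_(f : pauliG n) sigma C f a b * sigma C f c d = 2 ^+ n * ((a == d) && (b == c))%:R.
Proof.
rewrite /sigma.
under eq_bigr do rewrite -big_split /=.
rewrite -(bigA_distr_bigA (fun j p => pauli1 C p (a j) (b j) * pauli1 C p (c j) (d j))).
under eq_bigr do rewrite pauli1_complete.
rewrite big_split /= prodr_const card_ord; congr (_ * _).
have [/andP [/eqP -> /eqP ->]|neq] := boolP ((a == d) && (b == c)).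
  by rewrite big1 // => j _; rewrite !eqxx.
have [j neq_j] : exists j, ~~ ((a j == d j) && (b j == c j)).
  apply/existsP; rewrite -negb_forall; apply: contra neq => /forallP eq_j.
  by apply/andP; split; apply/eqP/ffunP => k; case/andP: (eq_j k) => /eqP ? /eqP ?.
by rewrite (bigD1 j) //= (negbTE neq_j) mul0r.
Qed.

Lemma pauli_expansion (A : op) u v :
  \sum_(f : pauliG n) sigma C f u v * optrace (opmul (sigma C f) A) = 2 ^+ n * A u v.
Proof.
rewrite /optrace /opmul.
transitivity (\sum_(x : bits n) \sum_(y : bits n)
                A y x * \sum_(f : pauliG n) sigma C f u v * sigma C f x y).
  under eq_bigr do rewrite mulr_sumr.
  rewrite exchange_big; apply: eq_bigr => x _.
  under eq_bigr do rewrite mulr_sumr.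
  rewrite exchange_big; apply: eq_bigr => y _.
  by rewrite mulr_sumr; apply: eq_bigr => f _; rewrite mulrA mulrC.
under eq_bigr do under eq_bigr do rewrite sigma_complete.
rewrite (bigD1 v) //= [X in _ + X]big1 ?addr0; last first.
  by move=> x neq_x; apply: big1 => y _; rewrite [v == x]eq_sym (negbTE neq_x) andbF !mulr0.
rewrite (bigD1 u) //= big1 ?addr0; last first.
  by move=> y neq_y; rewrite [u == y]eq_sym (negbTE neq_y) !mulr0.
by rewrite !eqxx mulr1 mulrC.
Qed.

Lemma pauli_coef_inj (A B : op) :
  (forall f, optrace (opmul (sigma C f) A) = optrace (opmul (sigma C f) B)) -> A = B.
Proof.
move=> eq_coef; apply: op_ext => x y; apply: (mulfI (_ : 2 ^+ n != 0)).
  by rewrite expf_neq0 // pnatr_eq0.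
by rewrite -!pauli_expansion; apply: eq_bigr => f _; rewrite eq_coef.
Qed.

End PauliOperators.

Section PositiveOperators.
Variables (C : numClosedFieldType) (n : nat).
Local Notation op := (bits n -> bits n -> C).
Implicit Types (f g : pauliG n) (A B : op).

Definition sform (A : op) (v w : bits n -> C) : C :=
  \sum_(x : bits n) \sum_(y : bits n) (v x)^* * A x y * w y.
Definition qform (A : op) (v : bits n -> C) : C := sform A v v.
Definition psd (A : op) : Prop := forall v, 0 <= qform A v.
Definition hermitian (A : op) : Prop := opadj A = A.

Lemma sum_delta2_r (F : bits n -> C) a b c :
  \sum_(y : bits n) F y * ((y == a)%:R + c * (y == b)%:R) = F a + c * F b.
Proof. by under eq_bigr do rewrite mulrDr mulrCA; rewrite big_split -mulr_sumr !sum_delta_r. Qed.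

Lemma qform_delta2 (A : op) a b c :
  qform A (fun x => (x == a)%:R + c * (x == b)%:R) =
  A a a + c * A a b + c^* * A b a + c^* * c * A b b.
Proof.
rewrite /qform /sform.
under eq_bigr => x _ do
  rewrite (sum_delta2_r (fun y => _ * A x y)) mulrCA -mulrDr mulrC conjCD conjCM !rmorph_nat.
by rewrite (sum_delta2_r (fun x => A x a + c * A x b)); ring.
Qed.

Lemma psd_hermitian (A : op) : psd A -> hermitian A.
Proof.
move=> psdA; apply: op_ext => a b; rewrite /opadj.
set p := A a b; set q := A b a.
pose Q c := qform A (fun x => (x == a)%:R + c * (x == b)%:R).
have Q_odd c : Q c - Q (- c) = 2 * (c * p + c^* * q).
  by rewrite /Q !qform_delta2 conjCN /p /q; ring.
(* [Q c] is real since it is nonnegative, hence so is its odd part in [c]. *)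
have odd_real c : (c * p + c^* * q)^* = c * p + c^* * q.
  apply: (mulfI (_ : 2 != 0 :> C)); first by rewrite pnatr_eq0.
  rewrite -Q_odd -[Q c](geC0_conj (psdA _)) -[Q (- c)](geC0_conj (psdA _)).
  by rewrite -rmorphB Q_odd rmorphM rmorph_nat.
have sum_real : p^* + q^* = p + q.
  by have := odd_real 1; rewrite rmorph1 !mul1r conjCD.
have diff_real : - 'i * p^* + 'i * q^* = 'i * p + - 'i * q.
  by have := odd_real 'i; rewrite conjCi conjCD !conjCM conjCN conjCi opprK.
apply: (mulfI (neq0Ci C)); apply: (mulfI (_ : 2 != 0 :> C)); first by rewrite pnatr_eq0.
have -> : 2 * ('i * q^*) = 'i * (p^* + q^*) + (- 'i * p^* + 'i * q^*) by ring.
by rewrite sum_real diff_real; ring.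
Qed.

Lemma qform_shift (A : op) w u c :
  qform A (fun x => w x + c * u x) =
  qform A w + c * sform A w u + c^* * sform A u w + c^* * c * qform A u.
Proof.
rewrite /qform /sform.
transitivity (\sum_(x : bits n) \sum_(y : bits n)
   ((w x)^* * A x y * w y + c * ((w x)^* * A x y * u y) + c^* * ((u x)^* * A x y * w y)
     + c^* * c * ((u x)^* * A x y * u y))).
  by apply: eq_bigr => x _; apply: eq_bigr => y _; rewrite conjCD conjCM; ring.
under eq_bigr => x _ do rewrite !big_split /= -!mulr_sumr.
by rewrite !big_split /= -!mulr_sumr.
Qed.

Lemma psd_kernel (A : op) w :
  psd A -> qform A w = 0 -> forall x, \sum_(y : bits n) A x y * w y = 0.
Proof.
move=> psdA qw0.
set u := fun x => \sum_(y : bits n) A x y * w y.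
set N := \sum_(x : bits n) u x * (u x)^*.
have suw : sform A u w = N.
  rewrite /sform /N; apply: eq_bigr => x _.
  by rewrite [RHS]mulrC /u mulr_sumr; apply: eq_bigr => y _; rewrite mulrA.
have swu : sform A w u = N.
  rewrite /sform exchange_big /N; apply: eq_bigr => y _.
  rewrite /u conjC_sum mulr_sumr; apply: eq_bigr => x _.
  rewrite conjCM -[A y x](congr1 (fun B => B y x) (psd_hermitian psdA)) /opadj conjCK.
  by rewrite mulrC [A x y * _]mulrC.
have N_ge0 : 0 <= N by apply: sumr_ge0 => x _; exact: mul_conjC_ge0.
set q := qform A u; have q_ge0 : 0 <= q by exact: psdA.
have q1_gt0 : 0 < q + 1 by rewrite ltr_wpDl.
set t := N / (q + 1).
have t_real : t^* = t by apply: geC0_conj; rewrite divr_ge0 // ltW.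
(* The quadratic [s |-> qform A (w - s u)], which is [- 2 s N + s^2 q] for real [s],
   would be negative at [s = t] unless [N = 0]. *)
have := psdA (fun x => w x + - t * u x).
rewrite qform_shift qw0 suw swu conjCN t_real -/q.
have -> : 0 + - t * N + - t * N + - t * - t * q = - (N ^+ 2 * ((q + 2) / (q + 1) ^+ 2)).
  by rewrite /t; field; exact: lt0r_neq0.
rewrite oppr_ge0 pmulr_lle0; last by rewrite divr_gt0 ?exprn_gt0 // ltr_wpDl.
move=> N2_le0; have /eqP : N = 0.
  by apply/eqP; rewrite -sqrf_eq0 eq_le N2_le0 exprn_ge0.
rewrite psumr_eq0 => [/allP uu0 x|x _]; last exact: mul_conjC_ge0.
by have /implyP/(_ isT) := uu0 x (mem_index_enum _); rewrite mul_conjC_eq0 => /eqP.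
Qed.

End PositiveOperators.

Section SigmaEigen.
Variables (C : numClosedFieldType) (n : nat).
Local Notation op := (bits n -> bits n -> C).
Implicit Types (f g : pauliG n) (A B : op).

Lemma sum_qform_cols (A B : op) :
  \sum_(k : bits n) qform A (fun y => B y k) = optrace (opmul A (opmul B (opadj B))).
Proof.
rewrite /qform /sform /optrace /opmul /opadj exchange_big; apply: eq_bigr => x _.
rewrite exchange_big; apply: eq_bigr => y _.
by rewrite mulr_sumr; apply: eq_bigr => k _; ring.
Qed.

Lemma psd_mul_sigma (A : op) (f : pauliG n) e :
  psd A -> optrace A = 1 -> e^* = e -> e * e = 1 -> optrace (opmul A (sigma C f)) = e ->
  opmul A (sigma C f) = opscale e A.
Proof.
move=> psdA trA1 e_real e2 trAs.
(* [P / 2] is the projector onto the [e]-eigenspace of [sigma f]. *)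
pose P : op := fun x y => (x == y)%:R - e * sigma C f x y.
have adjP : opadj P = P.
  apply: op_ext => x y; rewrite /opadj /P conjCD conjCN conjCM e_real sigma_adj.
  by rewrite rmorph_nat eq_sym.
have PP : opmul P P = opscale 2 P.
  apply: op_ext => x z; rewrite /opmul /P /opscale.
  transitivity (\sum_(y : bits n) ((x == y)%:R * (y == z)%:R - e * ((x == y)%:R * sigma C f y z)
      - e * (sigma C f x y * (y == z)%:R) + e * e * (sigma C f x y * sigma C f y z))).
    by apply: eq_bigr => y _; ring.
  rewrite !big_split /= !sumrN -!mulr_sumr sum_delta_l sum_delta_l sum_delta_r.
  have sqr : \sum_(y : bits n) sigma C f x y * sigma C f y z = (x == z)%:R.
    by rewrite -[LHS]/(opmul _ _ x z) sigma_sqr.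
  by rewrite sqr e2; ring.
have trAP : optrace (opmul A P) = optrace A - e * optrace (opmul A (sigma C f)).
  rewrite /optrace /opmul /P mulr_sumr -sumrB; apply: eq_bigr => x _.
  under eq_bigr do rewrite mulrBr mulrCA.
  by rewrite sumrB sum_delta_r mulr_sumr.
have qcol0 k : qform A (fun y => P y k) = 0.
  have /eqP : \sum_(k : bits n) qform A (fun y => P y k) = 0.
    by rewrite sum_qform_cols adjP PP opmulZr optraceZ trAP trA1 trAs e2 subrr mulr0.
  rewrite psumr_eq0 => [/allP /(_ k (mem_index_enum _)) /implyP /(_ isT) /eqP //|j _].
  exact: psdA.
apply: op_ext => x k; rewrite /opscale.
have := psd_kernel psdA (qcol0 k) x; rewrite /P.
under eq_bigr do rewrite mulrBr mulrCA.
rewrite sumrB sum_delta_r -mulr_sumr => /eqP; rewrite subr_eq0 => /eqP ->.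
by rewrite mulrA e2 mul1r.
Qed.

Definition sigma_eigen f A (e : C) : Prop := opmul (sigma C f) A = opscale e A.

Definition common_eigen f A B : Prop := exists e, sigma_eigen f A e /\ sigma_eigen f B e.

Lemma hermitian_mul_sigma A f e : hermitian A -> e^* = e ->
  opmul A (sigma C f) = opscale e A <-> sigma_eigen f A e.
Proof.
move=> hermA e_real; rewrite /sigma_eigen.
by split=> /(congr1 (@opadj C n)); rewrite opadj_mul opadjZ opadj_sigma hermA e_real.
Qed.

Lemma sigma_eigen_sign f B e :
  optrace B = 1 -> sigma_eigen f B e -> e * e = 1 /\ e^* = e.
Proof.
move=> trB1 eigB.
have e2 : e * e = 1.
  have := congr1 (@optrace C n) (opmulA (sigma C f) (sigma C f) B).
  by rewrite sigma_sqr opmul1l eigB opmulZr eigB opscaleA optraceZ trB1 mulr1.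
split=> //; have : (e - 1) * (e + 1) = e * e - 1 by ring.
rewrite e2 subrr => /eqP; rewrite mulf_eq0 subr_eq0 addr_eq0 => /orP [] /eqP ->.
  exact: rmorph1.
exact: conjCN1.
Qed.

Lemma anticomm_optrace_eq0 A f g e :
  hermitian A -> e^* = e -> e * e = 1 -> omega f g -> sigma_eigen g A e ->
  optrace (opmul (sigma C f) A) = 0.
Proof.
move=> hermA e_real e2 omega_fg eigA.
have /(hermitian_mul_sigma _ hermA e_real) eigA_r := eigA.
have Ae : A = opscale e (opmul (sigma C g) A) by rewrite eigA opscaleA e2 opscale1.
set t := optrace (opmul (sigma C f) A).
have : t = - t.
  rewrite {1}/t {1}Ae opmulZr optraceZ -opmulA sigma_anticomm // opmulZl optraceZ.
  by rewrite opmulA optrace_mulC opmulA eigA_r opmulZr optraceZ -/t mulN1r mulrN mulrA e2 mul1r.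
move/eqP; rewrite -subr_eq0 opprK -mulr2n -mulr_natr mulf_eq0 pnatr_eq0 orbF.
by move/eqP.
Qed.

Lemma sigma_eigen_gadd A f g e1 e2 :
  sigma_eigen f A e1 -> sigma_eigen g A e2 ->
  sigma_eigen (gadd f g) A ((pauli_phase C f g)^-1 * e1 * e2).
Proof.
move=> eig1 eig2; rewrite /sigma_eigen.
have -> : sigma C (gadd f g) = opscale (pauli_phase C f g)^-1 (opmul (sigma C f) (sigma C g)).
  by rewrite sigma_mul opscaleA mulVf ?pauli_phase_neq0 // opscale1.
rewrite opmulZl opmulA eig2 opmulZr eig1 !opscaleA.
by rewrite -!mulrA [e2 * e1]mulrC.
Qed.

Lemma common_eigen_gadd A B f g :
  common_eigen f A B -> common_eigen g A B -> common_eigen (gadd f g) A B.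
Proof.
move=> [e1 [eigA1 eigB1]] [e2 [eigA2 eigB2]].
by exists ((pauli_phase C f g)^-1 * e1 * e2); split; apply: sigma_eigen_gadd.
Qed.

Lemma common_eigen0 A B : common_eigen (gzero n) A B.
Proof. by exists 1; split; rewrite /sigma_eigen sigma0 opmul1l opscale1. Qed.

Lemma psd_common_eigen A B f e :
  psd A -> optrace A = 1 -> optrace B = 1 -> hermitian B -> sigma_eigen f B e ->
  optrace (opmul A (sigma C f)) = optrace (opmul B (sigma C f)) -> common_eigen f A B.
Proof.
move=> psdA trA trB hermB eigB trAB.
have [e2 e_real] := sigma_eigen_sign trB eigB.
exists e; split=> //; apply/(hermitian_mul_sigma _ (psd_hermitian psdA) e_real).
apply: psd_mul_sigma => //.
by rewrite trAB optrace_mulC eigB optraceZ trB mulr1.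
Qed.

Lemma eq_of_common_eigen (S : {set pauliG n}) A B :
  self_dual S -> hermitian A -> hermitian B -> optrace A = 1 -> optrace B = 1 ->
  (forall f, f \in S -> common_eigen f A B) -> A = B.
Proof.
move=> sdS hermA hermB trA trB eigS; apply: pauli_coef_inj => f.
have [fS|fNS] := boolP (f \in S).
  have [e [eigA eigB]] := eigS f fS.
  by rewrite eigA eigB !optraceZ trA trB.
have [g /andP [gS omega_fg]] : exists g, (g \in S) && omega f g.
  move: fNS; rewrite {1}sdS inE negb_forall => /existsP [g].
  by rewrite negb_imply negbK => omega_fg; exists g.
have [e [eigA eigB]] := eigS g gS.
have [e2 e_real] := sigma_eigen_sign trB eigB.
by rewrite (anticomm_optrace_eq0 hermA e_real e2 omega_fg eigA)
  (anticomm_optrace_eq0 hermB e_real e2 omega_fg eigB).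
Qed.

End SigmaEigen.

Section PartialTrace.
Variables (C : numClosedFieldType) (n : nat) (M : finType) (party : 'I_n -> M) (alpha : M).
Local Notation op := (bits n -> bits n -> C).
Local Notation glue := (glue party alpha).

Definition zero_on (u : bits n) : bool := [forall j, (party j == alpha) ==> ~~ u j].
Definition zero_off (z : bits n) : bool := [forall j, (party j != alpha) ==> ~~ z j].
Definition drop_party (x : bits n) : bits n := [ffun j => if party j == alpha then false else x j].
Definition keep_party (x : bits n) : bits n := [ffun j => if party j == alpha then x j else false].

Lemma drop_party_glue u z : (drop_party (glue u z) == u) = zero_on u.
Proof.
apply/eqP/forallP => [dropu j|zu].
  have := congr1 (fun x : bits n => x j) dropu; rewrite !ffunE.
  by case: (party j == alpha) => //= <-.
by apply/ffunP => j; rewrite !ffunE; have := zu j; case: (party j == alpha) => //= /negbTE ->.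
Qed.

Lemma keep_party_glue u z : (keep_party (glue u z) == z) = zero_off z.
Proof.
apply/eqP/forallP => [keepz j|zz].
  have := congr1 (fun x : bits n => x j) keepz; rewrite !ffunE.
  by case: (party j == alpha) => //= <-.
by apply/ffunP => j; rewrite !ffunE; have := zz j; case: (party j == alpha) => //= /negbTE ->.
Qed.

Lemma sum_glue (F : bits n -> C) :
  \sum_(x : bits n) F x = \sum_(u | zero_on u) \sum_(z | zero_off z) F (glue u z).
Proof.
rewrite pair_big_dep /= (reindex_onto (fun p : bits n * bits n => glue p.1 p.2)
                                      (fun x => (drop_party x, keep_party x))) /=.
  by apply: eq_bigl => -[u z] /=; rewrite xpair_eqE drop_party_glue keep_party_glue.
by move=> x _; apply/ffunP => j; rewrite !ffunE; case: (party j == alpha).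
Qed.

Definition sigma_off (g : pauliG n) (v u : bits n) : C :=
  \prod_(j < n | party j != alpha) pauli1 C (g j) (v j) (u j).

Lemma sigma_glue_coloc (S : {set pauliG n}) g v u z z' :
  g \in coloc party S alpha -> zero_off z -> zero_off z' ->
  sigma C g (glue v z') (glue u z) = (z' == z)%:R * sigma_off g v u.
Proof.
rewrite inE => /andP [_ /forallP g_off] zz zz'.
rewrite /sigma (bigID (fun j => party j == alpha)) /=; congr (_ * _); last first.
  by apply: eq_bigr => j /negbTE party_j; rewrite !ffunE party_j.
transitivity (\prod_(j < n | party j == alpha) ((z' j == z j)%:R : C)).
  apply: eq_bigr => j party_j; move: (g_off j); rewrite party_j /= => /eqP ->.
  by rewrite pauli1_id !ffunE party_j.
have [->|neq_z] := eqVneq z' z; first by rewrite big1 // => j _; rewrite eqxx.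
have [j neq_j] : exists j, z' j != z j.
  apply/existsP; rewrite -negb_forall; apply: contra neq_z => /forallP eq_z.
  by apply/eqP/ffunP => j; apply/eqP.
have party_j : party j == alpha.
  apply: contraT => party_j; move/forallP: zz => /(_ j); move/forallP: zz' => /(_ j).
  by rewrite party_j /= => /negbTE z'j /negbTE zj; move: neq_j; rewrite z'j zj.
by rewrite (bigD1 j) //= (negbTE neq_j) mul0r.
Qed.

Lemma optrace_mul_sigma_coloc (S : {set pauliG n}) g (A : op) :
  g \in coloc party S alpha ->
  optrace (opmul A (sigma C g)) =
  \sum_(u | zero_on u) \sum_(v | zero_on v) sigma_off g v u * ptrace party alpha A u v.
Proof.
move=> g_coloc; rewrite /optrace /opmul sum_glue; apply: eq_bigr => u _.
transitivity (\sum_(z | zero_off z) \sum_(v | zero_on v) A (glue u z) (glue v z) * sigma_off g v u).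
  apply: eq_bigr => z zz; rewrite sum_glue; apply: eq_bigr => v _.
  rewrite (bigD1 z) //= big1 ?addr0 => [|z' /andP [zz' neq_z]].
    by rewrite (sigma_glue_coloc _ _ g_coloc zz zz) eqxx mul1r.
  by rewrite (sigma_glue_coloc _ _ g_coloc zz zz') (negbTE neq_z) mul0r mulr0.
rewrite exchange_big; apply: eq_bigr => v _.
by rewrite /ptrace mulr_sumr; apply: eq_bigr => z _; rewrite mulrC.
Qed.

End PartialTrace.

Lemma Sloc_common_eigen (C : numClosedFieldType) n (M : finType) (party : 'I_n -> M)
    (S : {set pauliG n}) (A B : bits n -> bits n -> C) :
  (forall alpha g, g \in coloc party S alpha -> common_eigen g A B) ->
  forall f, f \in Sloc party S -> common_eigen f A B.
Proof.
move=> eig_coloc f; rewrite inE => /existsP [gs /andP [/forallP gs_coloc /eqP ->]].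
apply: (big_ind (fun h => common_eigen h A B)); first exact: common_eigen0.
  exact: common_eigen_gadd.
by move=> alpha _; apply: eig_coloc (gs_coloc alpha).
Qed.

Section StabilizerState.
Variables (C : numClosedFieldType) (n : nat) (psi : bits n -> C).

Lemma proj_hermitian : hermitian (proj psi).
Proof. by apply: op_ext => x y; rewrite /opadj /proj conjCM conjCK mulrC. Qed.

Lemma proj_psd : psd (proj psi).
Proof.
move=> v; set s := \sum_(x : bits n) (v x)^* * psi x.
have -> : qform (proj psi) v = s * s^*.
  rewrite /qform /sform /s conjC_sum mulr_suml; apply: eq_bigr => x _.
  by rewrite mulr_sumr; apply: eq_bigr => y _; rewrite /proj conjCM conjCK; ring.
exact: mul_conjC_ge0.
Qed.

Lemma proj_sigma_eigen f e :
  apply_op (sigma C f) psi = (fun x => e * psi x) -> sigma_eigen f (proj psi) e.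
Proof.
move=> eig; apply: op_ext => x z; rewrite /opmul /proj /opscale.
under eq_bigr do rewrite mulrA.
by rewrite -mulr_suml mulrA -(congr1 (fun v => v x) eig).
Qed.

End StabilizerState.

Theorem lemma2 (C : numClosedFieldType) (n : nat) (M : finType) (party : 'I_n -> M)
  (S : {set pauliG n}) (eps : pauliG n -> bool) (psi : bits n -> C) :
  self_dual S ->
  \sum_(x : bits n) psi x * (psi x)^* = 1 ->
  (forall f, f \in S -> apply_op (sigma C f) psi = (fun x => (-1) ^+ eps f * psi x)) ->
  S = Sloc party S ->
  forall rho : bits n -> bits n -> C,
    Gamma party psi rho <-> (forall x y, rho x y = proj psi x y).
Proof.
move=> sdS norm_psi stab_psi S_loc rho; split; last first.
  by move=> /op_ext ->; split=> //; split; [exact: proj_psd | exact: norm_psi].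
move=> [[psd_rho tr_rho] ptrace_rho].
suff -> : rho = proj psi by [].
apply: (eq_of_common_eigen sdS (psd_hermitian psd_rho) (proj_hermitian psi)) => //.
rewrite {1}S_loc => f; apply: Sloc_common_eigen => alpha g g_coloc.
have gS : g \in S by move: g_coloc; rewrite inE => /andP [].
apply: (psd_common_eigen psd_rho) => //; first exact: proj_hermitian.
  exact: proj_sigma_eigen (stab_psi g gS).
rewrite !(optrace_mul_sigma_coloc _ g_coloc).
by apply: eq_bigr => u _; apply: eq_bigr => v _; rewrite ptrace_rho.
Qed.
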